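(* Let $n\ge 5$ and let $\sigma$ be a maximal simplex of $\Delta_n$. If $|N(w)\cap\sigma|\ge 2$ for all $w\in\sigma$, then there exists $\tilde v\in\sigma$ with $|N(\tilde v)\cap\sigma|\ge 3$.
   Context: $\mathbb{I}_n$ is the $n$-dimensional hypercube graph on vertex set $\{0,1\}^n$ (adjacent iff differing in exactly one coordinate), with Hamming distance $d(v,w)=\#\{i: v(i)\ne w(i)\}$. $\Delta_n=\mathcal{VR}(\mathbb{I}_n;3)$ is the simplicial complex whose simplices are the subsets $\sigma\subseteq\{0,1\}^n$ with $d(x,y)\le 3$ for all $x,y\in\sigma$. $N(v)$ denotes the set of the $n$ vertices adjacent to $v$ in $\mathbb{I}_n$. *)

From mathcomp Require Import all_boot.
Set Implicit Arguments. Unset Strict Implicit. Unset Printing Implicit Defensive.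

(* Vertices of the n-cube I_n: {0,1}^n as finite functions 'I_n -> bool. *)
Definition vert (n : nat) := {ffun 'I_n -> bool}.

Definition hdist n (v w : vert n) : nat := #|[set i | v i != w i]|.

Definition nbhd n (v : vert n) : {set vert n} := [set w | hdist v w == 1].

(* Simplices of Delta_n = VR(I_n; 3): nonempty vertex sets of diameter <= 3. *)
Definition is_simplex n (s : {set vert n}) : bool :=
  (s != set0) && [forall x in s, forall y in s, hdist x y <= 3].

Definition is_maximal_simplex n (s : {set vert n}) : bool :=
  is_simplex s && [forall t : {set vert n}, (is_simplex t && (s \subset t)) ==> (t == s)].

From mathcomp Require Import all_boot zify.

Set Implicit Arguments. Unset Strict Implicit. Unset Printing Implicit Defensive.

(* Recording, for each vertex, the coordinates where it differs from a fixed
   w in s identifies the cube isometrically with the subsets of 'I_n under the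
   symmetric-difference distance; s becomes a maximal family F of diameter 3
   containing set0.  Suppose every member of F had exactly two neighbours.
   Those of set0 are {i} and {j}, the only singletons of F.  Then {i,j} is not
   in F: otherwise, for k outside {i,j}, the member of F far from {k} is a
   3-set containing i and j, a third neighbour of {i,j}.  Hence some Y in F
   lies at distance at least 4 from {i,j}; Y is a 2-set avoiding i and j, and
   being within distance 3 of set0, {i} and {j} forces every neighbour of Y to
   be a singleton inside Y, which is neither {i} nor {j}. *)

Section SymmetricDifference.

Variable T : finType.
Implicit Types (A B Y Z : {set T}) (a b : T).

Definition sdist A B : nat := #|(A :\: B) :|: (B :\: A)|.

Lemma sdistC A B : sdist A B = sdist B A.
Proof. by rewrite /sdist setUC. Qed.

Lemma sdistE A B : sdist A B + 2 * #|A :&: B| = #|A| + #|B|.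
Proof.
have dAB : (A :\: B) :&: (B :\: A) = set0.
  by apply/setP => x; rewrite !inE; case: (x \in A); case: (x \in B).
have := cardsID B A; have := cardsID A B.
by rewrite /sdist cardsU dAB cards0 subn0 setIC; lia.
Qed.

Lemma sdist0s A : sdist set0 A = #|A|.
Proof. by have := sdistE set0 A; rewrite set0I cards0 muln0 addn0 add0n. Qed.

Lemma sdist_sub A B : A \subset B -> sdist A B = #|B| - #|A|.
Proof. by move=> /setIidPl sAB; have := sdistE A B; rewrite sAB; lia. Qed.

Lemma cardsI1 Z a : #|Z :&: [set a]| = (a \in Z).
Proof.
case: (boolP (a \in Z)) => aZ; first by rewrite (setIidPr _) ?cards1 ?sub1set.
by apply/eqP; rewrite cards_eq0 setI_eq0 disjoint_sym disjoints1.
Qed.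

Lemma cardsIU1 Z a B : a \notin B -> #|Z :&: (a |: B)| = (a \in Z) + #|Z :&: B|.
Proof.
rewrite -disjoints1 => /disjoint_setI0 daB.
by rewrite setIUr cardsU cardsI1 setIACA setIid daB setI0 cards0 subn0.
Qed.

Lemma sdist1s a B : sdist [set a] B + 2 * (a \in B) = #|B|.+1.
Proof. by rewrite -cardsI1 setIC sdistE cards1. Qed.

Lemma sdist2s a b B : a != b ->
  sdist [set a; b] B + 2 * ((a \in B) + (b \in B)) = #|B|.+2.
Proof.
move=> ab; rewrite -(cardsI1 B b) -cardsIU1 ?inE // setIC sdistE cards2 ab; lia.
Qed.

Lemma mem_sdist1s_le3 a B : 3 <= #|B| -> sdist [set a] B <= 3 -> a \in B.
Proof. by have := sdist1s a B; lia. Qed.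

Lemma card_sdist1s_gt3 a B : 3 < sdist [set a] B -> 3 <= #|B|.
Proof. by have := sdist1s a B; lia. Qed.

Lemma sdist2s_gt3 a b Y : a != b -> #|Y| <= 3 -> 3 < sdist [set a; b] Y ->
  sdist [set a] Y <= 3 -> [/\ a \notin Y, b \notin Y & #|Y| = 2].
Proof.
move=> ab Y3 far near; have := sdist2s Y ab; have := sdist1s a Y.
by split; lia.
Qed.

Lemma adjacent_near_points_set1 a b Y Z : a != b -> a \notin Y -> b \notin Y ->
  #|Y| = 2 -> sdist Y Z = 1 -> #|Z| <= 3 ->
  sdist [set a] Z <= 3 -> sdist [set b] Z <= 3 -> exists2 z, z \in Y & Z = [set z].
Proof.
move=> ab aY bY Y2 YZ Z3 aZ bZ.
have abY : a \notin b |: Y by rewrite !inE negb_or ab.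
have := subset_leq_card (subsetIl Z (a |: (b |: Y))).
rewrite !cardsIU1 // => count.
have := sdistE Y Z; have := sdist1s a Z; have := sdist1s b Z.
rewrite setIC YZ Y2 => eb ea eYZ.
have ZY : Z :&: Y = Z.
  apply/eqP; rewrite eqEcard subsetIl; lia.
have /cards1P [z Zz] : #|Z| == 1 by lia.
by exists z; rewrite // -sub1set -Zz; apply/setIidPl.
Qed.

End SymmetricDifference.

Definition neighbours (T : finType) (F : {set {set T}}) (A : {set T}) :=
  [set B in F | sdist A B == 1].

Section MaximalFamily.

Variables (T : finType) (F : {set {set T}}).
Hypotheses (F0 : set0 \in F) (Fdiam : {in F &, forall A B, sdist A B <= 3}).
Hypothesis Fmax : forall X, X \notin F -> exists2 Y, Y \in F & 3 < sdist X Y.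

Lemma card_le3 Y : Y \in F -> #|Y| <= 3.
Proof. by move=> FY; rewrite -sdist0s Fdiam. Qed.

Lemma set1_members : #|neighbours F set0| = 2 ->
  exists i j, [/\ i != j, [set i] \in F, [set j] \in F &
                  forall k, [set k] \in F -> k = i \/ k = j].
Proof.
move=> /eqP /cards2P [A [B [AB defN]]].
have set1N C : C \in neighbours F set0 -> exists2 x, C = [set x] & C \in F.
  by rewrite inE sdist0s => /andP [FC /cards1P [x Cx]]; exists x.
have /set1N [i Ai FA] : A \in neighbours F set0 by rewrite defN !inE eqxx.
have /set1N [j Bj FB] : B \in neighbours F set0 by rewrite defN !inE eqxx orbT.
exists i, j; split; [by apply: contraNneq AB => ij; rewrite Ai Bj ij | by rewrite -Ai
  | by rewrite -Bj | move=> k Fk].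
have : [set k] \in neighbours F set0 by rewrite inE Fk sdist0s cards1.
by rewrite defN Ai Bj !inE => /orP [] /eqP /set1_inj; [left | right].
Qed.

Lemma pair_notin i j : 2 < #|T| -> i != j -> [set i] \in F -> [set j] \in F ->
  (forall k, [set k] \in F -> k = i \/ k = j) ->
  {in F, forall A, #|neighbours F A| <= 2} -> [set i; j] \notin F.
Proof.
move=> T3 ij Fi Fj Fset1 deg_le; apply/negP => Fij.
have /subsetPn [k _ kij] : ~~ ([set: T] \subset [set i; j]).
  by apply: contraTN T3 => /subset_leq_card; rewrite cardsT cards2 ij -leqNgt.
have Fk : [set k] \notin F.
  by apply/negP => /Fset1 [] kE; rewrite kE !inE eqxx ?orbT in kij.
have [Y FY /card_sdist1s_gt3 Y3] := Fmax Fk.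
have cY : #|Y| = 3 by apply/eqP; rewrite eqn_leq card_le3.
have ijY : [set i; j] \subset Y.
  by rewrite subUset !sub1set !mem_sdist1s_le3 ?Fdiam.
have N3 : 2 < #|neighbours F [set i; j]|.
  apply/card_gt2P; exists [set i], [set j], Y; rewrite !inE Fi Fj FY /=.
  have sub_i : [set i] \subset [set i; j] by rewrite sub1set !inE eqxx.
  have sub_j : [set j] \subset [set i; j] by rewrite sub1set !inE eqxx orbT.
  rewrite (sdistC _ [set i]) (sdistC _ [set j]) !sdist_sub // !cards1 cards2 ij cY.
  split; split => //.
  - by apply: contra ij => /eqP /set1_inj /eqP.
  - by apply/eqP => jE; rewrite -jE cards1 in cY.
  - by apply/eqP => iE; rewrite iE cards1 in cY.
by have := deg_le _ Fij; rewrite leqNgt N3.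
Qed.

Lemma maximal_family_deg3 : 2 < #|T| -> {in F, forall A, 2 <= #|neighbours F A|} ->
  exists2 A, A \in F & 2 < #|neighbours F A|.
Proof.
move=> T3 deg_ge; apply/exists_inP; apply: contraT => /exists_inPn small.
have deg_le : {in F, forall A, #|neighbours F A| <= 2}.
  by move=> A FA; rewrite leqNgt small.
have deg0 : #|neighbours F set0| = 2 by apply/eqP; rewrite eqn_leq deg_le ?deg_ge.
have [i [j [ij Fi Fj Fset1]]] := set1_members deg0.
have [Y FY farY] := Fmax (pair_notin T3 ij Fi Fj Fset1 deg_le).
have [iY jY Y2] := sdist2s_gt3 ij (card_le3 FY) farY (Fdiam Fi FY).
have /card_gt0P [Z] : 0 < #|neighbours F Y| by apply: leq_trans (deg_ge _ FY).
rewrite inE => /andP [FZ /eqP YZ].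
have [z zY Zz] := adjacent_near_points_set1 ij iY jY Y2 YZ (card_le3 FZ)
  (Fdiam Fi FZ) (Fdiam Fj FZ).
rewrite Zz in FZ.
by case: (Fset1 _ FZ) => zE; rewrite zE ?(negbTE iY) ?(negbTE jY) in zY.
Qed.

End MaximalFamily.

Lemma hdistC n (v w : vert n) : hdist v w = hdist w v.
Proof. by apply: eq_card => i; rewrite !inE eq_sym. Qed.

Lemma hdistvv n (v : vert n) : hdist v v = 0.
Proof. by apply/eqP; rewrite cards_eq0; apply/eqP/setP => i; rewrite !inE eqxx. Qed.

Lemma maximal_simplex_far n (s : {set vert n}) x :
  is_maximal_simplex s -> x \notin s -> exists2 y, y \in s & 3 < hdist x y.
Proof.
move=> /andP [/andP [_ sdiam] smax] xs; apply/exists_inP.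
apply: contraNT xs => /exists_inPn near.
have simplex_xs : is_simplex (x |: s).
  apply/andP; split; first by apply/set0Pn; exists x; rewrite setU11.
  have near' y : y \in s -> hdist x y <= 3 by move=> ys; rewrite leqNgt near.
  apply/forall_inP => y /setU1P [-> | ys];
    apply/forall_inP => z /setU1P [-> | zs].
  - by rewrite hdistvv.
  - exact: near'.
  - by rewrite hdistC near'.
  - by move/forall_inP: sdiam => /(_ _ ys) /forall_inP ->.
move/forallP: smax => /(_ (x |: s)); rewrite simplex_xs subsetUr => /eqP <-.
exact: setU11.
Qed.

Section CubeCoordinates.

Variables (n : nat) (w : vert n).

Definition diffs (v : vert n) : {set 'I_n} := [set i | v i != w i].

Definition toggle (A : {set 'I_n}) : vert n := [ffun i => w i (+) (i \in A)].

Lemma diffsK : cancel diffs toggle.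
Proof. by move=> v; apply/ffunP => i; rewrite ffunE inE; case: (w i); case: (v i). Qed.

Lemma toggleK : cancel toggle diffs.
Proof. by move=> A; apply/setP => i; rewrite !inE ffunE; case: (w i); case: (i \in A). Qed.

Lemma diffs_inj : injective diffs. Proof. exact: can_inj diffsK. Qed.

Lemma diffs_id : diffs w = set0.
Proof. by apply/setP => i; rewrite !inE eqxx. Qed.

Lemma hdist_diffs x y : hdist x y = sdist (diffs x) (diffs y).
Proof.
apply: eq_card => i; rewrite !inE.
by case: (x i); case: (y i); case: (w i).
Qed.

Lemma neighbours_diffs (s : {set vert n}) v :
  neighbours (diffs @: s) (diffs v) = diffs @: (nbhd v :&: s).
Proof.
apply/setP => A; rewrite -(toggleK A) !inE !(mem_imset _ _ diffs_inj) !inE.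
by rewrite -hdist_diffs andbC.
Qed.

End CubeCoordinates.

Theorem mainTheorem9 (n : nat) (s : {set vert n}) :
  5 <= n ->
  is_maximal_simplex s ->
  (forall w, w \in s -> 2 <= #|nbhd w :&: s|) ->
  exists2 v, v \in s & 3 <= #|nbhd v :&: s|.
Proof.
move=> n5 smax deg_s; have /andP [/andP [/set0Pn [w ws] sdiam] _] := smax.
have deg_diffs v : #|neighbours (diffs w @: s) (diffs w v)| = #|nbhd v :&: s|.
  by rewrite neighbours_diffs card_imset //; apply: diffs_inj.
have [|||||A /imsetP [v vs ->]] := @maximal_family_deg3 _ (diffs w @: s).
- by rewrite -(diffs_id w) imset_f.
- move=> _ _ /imsetP [x xs ->] /imsetP [y ys ->]; rewrite -hdist_diffs.
  by move/forall_inP: sdiam => /(_ _ xs) /forall_inP ->.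
- move=> X; rewrite -(toggleK w X) (mem_imset _ _ (@diffs_inj _ w)).
  move=> /(maximal_simplex_far smax) [y ys far].
  by exists (diffs w y); rewrite ?imset_f // -hdist_diffs.
- by rewrite card_ord; apply: leq_trans n5.
- by move=> _ /imsetP [v vs ->]; rewrite deg_diffs deg_s.
- by rewrite deg_diffs => deg3; exists v.
Qed.
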